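(* For every partition $\lambda$ with $k$ parts and every $D\subseteq\widehat{\mathrm{dg}}(\lambda)$, \[ F_{\lambda,D}(X;t)=G_{\widehat{\boldsymbol\nu}(\lambda,D)}(X;t). \]
   Context: Let $\lambda=(\lambda_1\ge\dots\ge\lambda_k>0)$ be a partition; $\mathrm{dg}(\lambda)=\{(r,i):1\le i\le k,\ 1\le r\le\lambda_i\}$ ($(r,i)$ = row $r$ from the bottom, column $i$ from the left, columns bottom-justified of heights $\lambda_i$). $\widehat{\mathrm{dg}}(\lambda)$ is the set of cells not in row 1. A filling is $\sigma:\mathrm{dg}(\lambda)\to\mathbb Z_{>0}$, $x^\sigma=\prod_u x_{\sigma(u)}$; $\mathrm{Des}(\sigma)$ is the set of cells $(r,i)$, $r>1$, with $\sigma((r,i))>\sigma((r-1,i))$. An ordered pair of cells $(u,v)$, $u=(r,i)$, $v=(r',j)$, is attacking if either $r=r'$ and $i>j$, or $r=r'+1$ and $i<j$; it is an attacking inversion if $\sigma(u)>\sigma(v)$; $\widehat{\mathrm{inv}}(\sigma)$ is their number. $F_{\lambda,D}(X;t)=\sum_{\sigma:\mathrm{Des}(\sigma)=D}t^{\widehat{\mathrm{inv}}(\sigma)}x^\sigma$. Ribbons: a ribbon of size $m$ with descent set $S\subseteq\{1,\dots,m-1\}$ has cells labelled $1,\dots,m$ from northwest to southeast, cell $i+1$ lying directly below cell $i$ if $i\in S$ and directly to the right of cell $i$ otherwise; cell $i$ is assigned the diagonal $d=m-i+1$. A semistandard filling $\rho$ of it assigns positive integers with $\rho(i)\le\rho(i+1)$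 if $i\notin S$ and $\rho(i)>\rho(i+1)$ if $i\in S$. For a tuple of ribbons $\boldsymbol\nu=(\nu^{(1)},\dots,\nu^{(k)})$ and a tuple $\boldsymbol\rho$ of semistandard fillings, an inversion is a pair of cells $u\in\nu^{(i)}$, $v\in\nu^{(j)}$ with $\rho^{(i)}(u)>\rho^{(j)}(v)$ and either ($i<j$ and $d(u)=d(v)$) or ($i>j$ and $d(u)=d(v)+1$). The LLT polynomial is $G_{\boldsymbol\nu}(X;t)=\sum_{\boldsymbol\rho}t^{\mathrm{inv}(\boldsymbol\rho)}x^{\boldsymbol\rho}$, $x^{\boldsymbol\rho}=\prod_i\prod_{u}x_{\rho^{(i)}(u)}$. Finally $\widehat{\boldsymbol\nu}(\lambda,D)=(\nu_k,\nu_{k-1},\dots,\nu_1)$ where $\nu_j$ is the ribbon of size $\lambda_j$ with descent set $\{\lambda_j-r+1:(r,j)\in D\}$. *)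

From HB Require Import structures.
From mathcomp Require Import all_boot all_order all_algebra.
From mathcomp Require Import mpoly.

Set Implicit Arguments.
Unset Strict Implicit.
Unset Printing Implicit Defensive.

Import GRing.Theory.
Local Open Scope ring_scope.

(* A value (i : 'I_n) of a filling stands for the positive integer i+1 *)
(* and contributes the variable 'X_i (= x_{i+1}).                      *)

Definition cells (L : seq (nat * nat)) : finType := seq_sub L.

(* value of a filling at a coordinate pair (as a positive integer), and
   0 if the pair is not a cell *)
Definition fv (L : seq (nat * nat)) (n : nat) (s : {ffun cells L -> 'I_n})
    (p : nat * nat) : nat :=
  match @insub _ (fun x => x \in L) (cells L) p with
  | Some u => (s u).+1
  | None => 0%N
  end.

Definition fillpoly (L : seq (nat * nat)) (n : nat)
    (P : {ffun cells L -> 'I_n} -> bool) (st : {ffun cells L -> 'I_n} -> nat)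
    : {mpoly {poly int}[n]} :=
  \sum_(s : {ffun cells L -> 'I_n} | P s)
     ((('X : {poly int}) ^+ st s)%:MP * \prod_(u : cells L) 'X_(s u)).

Definition is_partition (l : seq nat) : bool :=
  sorted geq l && all (fun x => 0 < x)%N l.

(* lambda_j, 1-based *)
Definition lam (l : seq nat) (j : nat) : nat := nth 0%N l j.-1.

Definition dg (l : seq nat) : seq (nat * nat) :=
  [seq (r, i) | i <- iota 1 (size l), r <- iota 1 (lam l i)].

Definition cell_row (p : nat * nat) := p.1.
Definition cell_col (p : nat * nat) := p.2.

Definition Des (l : seq nat) (n : nat) (s : {ffun cells (dg l) -> 'I_n})
    : {set cells (dg l)} :=
  [set u : cells (dg l) | (1 < cell_row (val u))%N &&
     (fv s (cell_row (val u) - 1, cell_col (val u))%N < fv s (val u))%N].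

Definition attacking (u v : nat * nat) : bool :=
  ((cell_row u == cell_row v) && (cell_col v < cell_col u)%N) ||
  ((cell_row u == (cell_row v).+1) && (cell_col u < cell_col v)%N).

Definition invhat (l : seq nat) (n : nat) (s : {ffun cells (dg l) -> 'I_n})
    : nat :=
  #|[set uv : cells (dg l) * cells (dg l) |
      attacking (val uv.1) (val uv.2) && (s uv.2 < s uv.1)%N]|.

Definition Fpoly (n : nat) (l : seq nat) (D : {set cells (dg l)})
    : {mpoly {poly int}[n]} :=
  fillpoly (fun s => Des s == D) (@invhat l n).

(* a ribbon of size rsize with descent set rdes (subset of {1..rsize-1}) *)
Record ribbon := Ribbon { rsize : nat; rdes : seq nat }.

(* i-th ribbon of a tuple, 1-based *)
Definition rib (nu : seq ribbon) (i : nat) : ribbon :=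
  nth (Ribbon 0 [::]) nu i.-1.

(* cells (i, c): c-th cell (1-based, labelled NW to SE) of the i-th ribbon *)
Definition rcells (nu : seq ribbon) : seq (nat * nat) :=
  [seq (i, c) | i <- iota 1 (size nu), c <- iota 1 (rsize (rib nu i))].

Definition rdiag (nu : seq ribbon) (p : nat * nat) : nat :=
  (rsize (rib nu p.1) - p.2 + 1)%N.

Definition semistandard (nu : seq ribbon) (n : nat)
    (s : {ffun cells (rcells nu) -> 'I_n}) : bool :=
  [forall u : cells (rcells nu),
     let i := (val u).1 in let c := (val u).2 in
     (c < rsize (rib nu i))%N ==>
       (if c \in rdes (rib nu i)
        then (fv s (i, c.+1) < fv s (i, c))%N
        else (fv s (i, c) <= fv s (i, c.+1))%N)].

Definition lltinv (nu : seq ribbon) (n : nat)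
    (s : {ffun cells (rcells nu) -> 'I_n}) : nat :=
  #|[set uv : cells (rcells nu) * cells (rcells nu) |
      (s uv.2 < s uv.1)%N &&
      ((((val uv.1).1 < (val uv.2).1)%N &&
          (rdiag nu (val uv.1) == rdiag nu (val uv.2))) ||
       (((val uv.2).1 < (val uv.1).1)%N &&
          (rdiag nu (val uv.1) == (rdiag nu (val uv.2)).+1)))]|.

Definition LLT (n : nat) (nu : seq ribbon) : {mpoly {poly int}[n]} :=
  fillpoly (@semistandard nu n) (@lltinv nu n).

Definition inD (l : seq nat) (D : {set cells (dg l)}) (p : nat * nat) : bool :=
  [exists u in D, val u == p].

Definition nu_j (l : seq nat) (D : {set cells (dg l)}) (j : nat) : ribbon :=
  Ribbon (lam l j)
    [seq (lam l j - r + 1)%N | r <- iota 1 (lam l j) & inD D (r, j)].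

Definition nuhat (l : seq nat) (D : {set cells (dg l)}) : seq ribbon :=
  rev [seq nu_j D j | j <- iota 1 (size l)].

From HB Require Import structures.
From mathcomp Require Import all_boot all_order all_algebra.
From mathcomp Require Import mpoly.
From mathcomp Require Import zify.

Set Implicit Arguments.
Unset Strict Implicit.
Unset Printing Implicit Defensive.

Import GRing.Theory.

(* The identity F_{lambda,D} = G_{nuhat(lambda,D)} is a change of coordinates
   on the cells.  Write k for the number of parts and j := k+1-i.  The i-th
   ribbon of nuhat(lambda,D) is column j of dg(lambda) read from top to
   bottom: its c-th cell corresponds to the cell (lambda_j + 1 - c, j), and
   this map is a bijection from the ribbon cells onto dg(lambda).
   Transporting fillings along it:
   - the ribbon condition between cells c and c+1 is the comparison of the
     two vertically adjacent cells of column j, and c is a ribbon descent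
     exactly when the upper cell lies in D; hence the transported filling is
     semistandard iff Des(sigma) = D (using that D avoids row 1);
   - the two kinds of LLT inversions (same diagonal, or diagonal one apart)
     are exactly the two kinds of attacking pairs. *)

Lemma fillpoly_transport (L1 L2 : seq (nat * nat)) (n : nat)
    (P1 : {ffun cells L1 -> 'I_n} -> bool) (st1 : {ffun cells L1 -> 'I_n} -> nat)
    (P2 : {ffun cells L2 -> 'I_n} -> bool) (st2 : {ffun cells L2 -> 'I_n} -> nat)
    (f : cells L2 -> cells L1) (g : cells L1 -> cells L2) :
  cancel f g -> cancel g f ->
  (forall s : {ffun cells L1 -> 'I_n}, P2 [ffun v => s (f v)] = P1 s) ->
  (forall s : {ffun cells L1 -> 'I_n}, st2 [ffun v => s (f v)] = st1 s) ->
  fillpoly P1 st1 = fillpoly P2 st2.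
Proof.
move=> fK gK eqP12 eqst12; rewrite /fillpoly.
pose pull (s : {ffun cells L1 -> 'I_n}) := [ffun v => s (f v)].
pose push (s : {ffun cells L2 -> 'I_n}) := [ffun u => s (g u)].
rewrite (reindex pull); last first.
  by exists push => s _; apply/ffunP => x; rewrite !ffunE ?fK ?gK.
apply: eq_big => [s | s _]; first by rewrite eqP12.
rewrite eqst12; congr (_ * _)%R.
rewrite (reindex f); last by exists g => x _; rewrite ?fK ?gK.
by apply: eq_bigr => x _; rewrite ffunE.
Qed.

Lemma fv_val (L : seq (nat * nat)) (n : nat) (s : {ffun cells L -> 'I_n})
    (u : cells L) :
  fv s (val u) = (s u).+1.
Proof. by rewrite /fv valK. Qed.

Section Coordinates.
Variables (l : seq nat) (D : {set cells (dg l)}).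
Local Notation k := (size l).
Local Notation nu := (nuhat D).

Lemma mem_dg (p : nat * nat) :
  (p \in dg l) = [&& 0 < p.2, p.2 <= k, 0 < p.1 & p.1 <= lam l p.2].
Proof.
case: p => r j /=; apply/allpairsPdep/idP.
  by case=> x [y [/[!mem_iota] xi yi [-> ->]]]; move: xi yi; lia.
by move=> H; exists j, r; rewrite !mem_iota; split => //; lia.
Qed.

Lemma size_nuhat : size nu = k.
Proof. by rewrite size_rev size_map size_iota. Qed.

Lemma rib_nuhat (i : nat) : 0 < i <= k -> rib nu i = nu_j D (k.+1 - i).
Proof.
move=> Hi; rewrite /rib /nuhat nth_rev; last by rewrite size_map size_iota; lia.
rewrite size_map size_iota (nth_map 0); last by rewrite size_iota; lia.
by rewrite nth_iota; [congr nu_j; lia | lia].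
Qed.

Lemma mem_rcells (p : nat * nat) :
  (p \in rcells nu) =
  [&& 0 < p.1, p.1 <= k, 0 < p.2 & p.2 <= lam l (k.+1 - p.1)].
Proof.
case: p => i c /=; apply/allpairsPdep/idP.
  case=> x [y [/[!mem_iota] xi yi [-> ->]]]; move: xi yi.
  by rewrite size_nuhat => xi; rewrite rib_nuhat /=; lia.
move=> H; exists i, c; rewrite !mem_iota size_nuhat; split => //; first lia.
by rewrite rib_nuhat /=; lia.
Qed.

Definition rib_to_dg (p : nat * nat) : nat * nat :=
  (lam l (k.+1 - p.1) + 1 - p.2, k.+1 - p.1).
Definition dg_to_rib (p : nat * nat) : nat * nat :=
  (k.+1 - p.2, lam l p.2 + 1 - p.1).

Lemma rib_to_dg_mem (p : nat * nat) : p \in rcells nu -> rib_to_dg p \in dg l.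
Proof. by rewrite mem_rcells mem_dg /rib_to_dg /=; lia. Qed.

Lemma dg_to_rib_mem (p : nat * nat) : p \in dg l -> dg_to_rib p \in rcells nu.
Proof.
case: p => r j; rewrite mem_rcells mem_dg /dg_to_rib /= => H.
have -> : k.+1 - (k.+1 - j) = j by lia.
lia.
Qed.

Lemma dg_to_ribK (p : nat * nat) : p \in dg l -> rib_to_dg (dg_to_rib p) = p.
Proof.
case: p => r j; rewrite mem_dg /dg_to_rib /rib_to_dg /= => H.
have -> : k.+1 - (k.+1 - j) = j by lia.
by congr pair; lia.
Qed.

Lemma rib_to_dgK (p : nat * nat) : p \in rcells nu -> dg_to_rib (rib_to_dg p) = p.
Proof.
by case: p => i c; rewrite mem_rcells /dg_to_rib /rib_to_dg /= => H; congr pair; lia.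
Qed.

Definition to_dg (v : cells (rcells nu)) : cells (dg l) :=
  SeqSub (rib_to_dg_mem (ssvalP v)).
Definition to_rib (u : cells (dg l)) : cells (rcells nu) :=
  SeqSub (dg_to_rib_mem (ssvalP u)).

Lemma to_dgK : cancel to_dg to_rib.
Proof. by move=> v; apply: val_inj; rewrite /= rib_to_dgK // (ssvalP v). Qed.

Lemma to_ribK : cancel to_rib to_dg.
Proof. by move=> u; apply: val_inj; rewrite /= dg_to_ribK // (ssvalP u). Qed.

Lemma inD_val (u : cells (dg l)) : inD D (val u) = (u \in D).
Proof.
apply/existsP/idP => [[w /andP[wD /eqP /val_inj <-]] // | uD].
by exists u; rewrite uD eqxx.
Qed.

Lemma mem_rdes_nuhat (i c : nat) : 0 < i <= k ->
  (c \in rdes (rib nu i)) =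
  (0 < c <= lam l (k.+1 - i)) && inD D (rib_to_dg (i, c)).
Proof.
move=> Hi; rewrite rib_nuhat //= /rib_to_dg /=; set j := k.+1 - i.
apply/mapP/idP => [[r /[!mem_filter] /andP[Hr] /[!mem_iota] Hr2 ->] | /andP[Hc Hin]].
  have -> : lam l j + 1 - (lam l j - r + 1) = r by lia.
  by rewrite Hr andbT; lia.
exists (lam l j + 1 - c); last by lia.
by rewrite mem_filter Hin mem_iota; lia.
Qed.

Variable n : nat.

Definition to_rib_filling (s : {ffun cells (dg l) -> 'I_n})
    : {ffun cells (rcells nu) -> 'I_n} :=
  [ffun v => s (to_dg v)].

Lemma fv_to_rib_filling (s : {ffun cells (dg l) -> 'I_n}) (p : nat * nat) :
  p \in rcells nu -> fv (to_rib_filling s) p = fv s (rib_to_dg p).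
Proof.
move=> Hp; have -> : p = val (SeqSub Hp) by [].
by rewrite fv_val -[rib_to_dg _]/(val (to_dg (SeqSub Hp))) fv_val ffunE.
Qed.

Definition des_agrees (s : {ffun cells (dg l) -> 'I_n}) (u : cells (dg l))
    : bool :=
  (1 < (val u).1) ==>
    (if u \in D then fv s ((val u).1 - 1, (val u).2) < fv s (val u)
     else fv s (val u) <= fv s ((val u).1 - 1, (val u).2)).

Definition ribbon_step (s : {ffun cells (rcells nu) -> 'I_n}) (i c : nat)
    : bool :=
  (c < rsize (rib nu i)) ==>
    (if c \in rdes (rib nu i) then fv s (i, c.+1) < fv s (i, c)
     else fv s (i, c) <= fv s (i, c.+1)).

(* The ribbon step at ribbon cell v is the descent condition at the diagram
   cell corresponding to v: both compare v with the cell just above it. *)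
Lemma ribbon_step_to_dg (s : {ffun cells (dg l) -> 'I_n})
    (v : cells (rcells nu)) :
  ribbon_step (to_rib_filling s) (val v).1 (val v).2 = des_agrees s (to_dg v).
Proof.
rewrite /ribbon_step /des_agrees -inD_val /=.
case: (ssval v) (ssvalP v) => i c /= Hv; move: (Hv); rewrite mem_rcells /= => H.
have Hi : 0 < i <= k by lia.
rewrite mem_rdes_nuhat // rib_nuhat //= /rib_to_dg /=.
set j := k.+1 - i.
have -> : (c < lam l j) = (1 < lam l j + 1 - c) by lia.
case: ltnP => //= Hc.
have Hc1 : (i, c.+1) \in rcells nu by rewrite mem_rcells /= -/j; lia.
rewrite (fv_to_rib_filling s Hv) (fv_to_rib_filling s Hc1) /rib_to_dg /= -/j.
have -> : lam l j + 1 - c.+1 = lam l j + 1 - c - 1 by lia.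
by have -> : 0 < c <= lam l j by lia.
Qed.

Lemma semistandard_to_rib (s : {ffun cells (dg l) -> 'I_n}) :
  semistandard (to_rib_filling s) = [forall u, des_agrees s u].
Proof.
have -> : semistandard (to_rib_filling s) =
          [forall v : cells (rcells nu),
             ribbon_step (to_rib_filling s) (val v).1 (val v).2] by [].
apply/forallP/forallP => [H u | H v]; last by rewrite ribbon_step_to_dg.
by have := H (to_rib u); rewrite ribbon_step_to_dg to_ribK.
Qed.

Lemma des_agrees_Des (s : {ffun cells (dg l) -> 'I_n}) :
  (forall u, u \in D -> 1 < (val u).1) ->
  [forall u, des_agrees s u] = (Des s == D).
Proof.
move=> Drow; apply/forallP/eqP => [H | DesE u].
  apply/setP => u; rewrite inE /cell_row /cell_col; have := H u; rewrite /des_agrees.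
  case: ltnP => [_ /= | Hr _]; last by apply/esym/negbTE/negP => /Drow; lia.
  by case: (u \in D) => [-> // | Hle]; apply/negbTE; rewrite -leqNgt.
by rewrite /des_agrees -DesE inE /cell_row /cell_col; case: ltnP => //= _; case: ltnP.
Qed.

Lemma llt_pair_attacking (v1 v2 : cells (rcells nu)) :
  (((val v1).1 < (val v2).1) && (rdiag nu (val v1) == rdiag nu (val v2))) ||
  (((val v2).1 < (val v1).1) && (rdiag nu (val v1) == (rdiag nu (val v2)).+1))
  = attacking (val (to_dg v1)) (val (to_dg v2)).
Proof.
rewrite /attacking /rib_to_dg /rdiag /cell_row /cell_col /=.
case: (ssval v1) (ssvalP v1) => i1 c1; case: (ssval v2) (ssvalP v2) => i2 c2.
by rewrite !mem_rcells /= => H2 H1; rewrite !rib_nuhat /=; lia.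
Qed.

Lemma lltinv_to_rib (s : {ffun cells (dg l) -> 'I_n}) :
  lltinv (to_rib_filling s) = invhat s.
Proof.
rewrite /lltinv /invhat; set A := [set uv : cells (dg l) * cells (dg l) | _].
pose F (uv : cells (rcells nu) * cells (rcells nu)) := (to_dg uv.1, to_dg uv.2).
pose G (uv : cells (dg l) * cells (dg l)) := (to_rib uv.1, to_rib uv.2).
have FK : cancel F G by case=> a b; rewrite /F /G /= !to_dgK.
have GK : cancel G F by case=> a b; rewrite /F /G /= !to_ribK.
rewrite -(card_imset A (can_inj GK)) (can2_imset_pre A GK FK).
by apply: eq_card => uv; rewrite !inE /F /= !ffunE llt_pair_attacking andbC.
Qed.

End Coordinates.

Theorem mainTheorem4 (n : nat) (l : seq nat) (D : {set cells (dg l)}) :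
  is_partition l ->
  (forall u, u \in D -> (1 < cell_row (val u))%N) ->
  Fpoly n D = LLT n (nuhat D).
Proof.
move=> _ Drow; apply: (fillpoly_transport (@to_dgK l D) (@to_ribK l D)) => s.
  by rewrite -/(to_rib_filling D s) semistandard_to_rib des_agrees_Des.
by rewrite -/(to_rib_filling D s) lltinv_to_rib.
Qed.
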